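(* Let $d\ge 1$ and $n\ge d+2$. Any linear automorphism ${\bf A}$ of $M_{d,n}$ is a linear automorphism of $M_{1,n}$.
   Context: Let $N=\binom n2$, coordinates of $\mathbb C^N$ indexed by edges $\{i,j\}$ of $K_n$. For a complex configuration ${\bf p}$ of $n$ points in $\mathbb C^d$, $m({\bf p})$ has coordinates $m_{ij}=\sum_{k=1}^d({\bf p}_i^k-{\bf p}_j^k)^2$ (no conjugation); $M_{d,n}\subset\mathbb C^N$ is the image of $m$ over all complex configurations in $\mathbb C^d$ (and $M_{1,n}$ the analogous image for configurations in $\mathbb C^1$). A linear automorphism of a variety $V\subset\mathbb C^N$ is a non-singular $N\times N$ complex matrix mapping $V$ bijectively onto itself. *)

From HB Require Import structures.
From mathcomp Require Import all_boot all_order all_algebra.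
From mathcomp Require Import complex.
From mathcomp Require Import reals.
Set Implicit Arguments. Unset Strict Implicit. Unset Printing Implicit Defensive.
Import Order.TTheory GRing.Theory Num.Theory.
Local Open Scope ring_scope.

(* Edges {i,j} of K_n, represented as ordered pairs (i,j) with i < j. *)
Definition edge (n : nat) := {x : 'I_n * 'I_n | (x.1 < x.2)%N}.

(* N = binom n 2 = number of edges; coordinates of C^N are indexed by
   'I_(nedges n), identified with edges via enum_val / enum_rank. *)
Definition nedges (n : nat) : nat := #|{: edge n}|.

(* A complex configuration of n points in C^d: p i k = k-th coordinate of p_i. *)
Definition config (C : Type) (d n : nat) := 'I_n -> 'I_d -> C.

(* The measurement map m(p) (no conjugation), as a column vector of C^N. *)
Definition mmap (R : realType) (d n : nat) (p : config R[i] d n)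
  : 'cV[R[i]]_(nedges n) :=
  \col_(e < nedges n)
     let ij := val (enum_val e) in
     \sum_(k < d) (p ij.1 k - p ij.2 k) ^+ 2.

Definition Mdn (R : realType) (d n : nat) : 'cV[R[i]]_(nedges n) -> Prop :=
  fun v => exists p : config R[i] d n, v = mmap p.

Arguments Mdn {R} d n _.

(* A linear automorphism of V: a non-singular N x N matrix mapping V
   bijectively onto V (injectivity is automatic from non-singularity). *)
Definition lin_aut (R : realType) (N : nat) (V : 'cV[R[i]]_N -> Prop)
  (A : 'M[R[i]]_N) : Prop :=
  A \in unitmx /\
  (forall v, V v -> V (A *m v)) /\
  (forall w, V w -> exists2 v, V v & A *m v = w).

(* Fix a base vertex b.  Polarising the squared distances to b gives a linear
   map X |-> gram b X into symmetric n x n matrices, and over C a symmetric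
   matrix is M M^T with M of width r iff its rank is at most r; hence M_{r,n}
   is {X | rank (gram b X) <= r}.  It suffices to show that an automorphism A
   of M_{k+1,n} preserves M_{k,n} when n >= k + 3.  If X lies in M_{k,n} but
   AX does not, then gram b (AX) has rank exactly k + 1, a smooth point of the
   determinantal variety.  For Z in M_{1,n} the line X + tZ stays in M_{k+1,n},
   hence so does AX + tAZ, so gram b (AZ) is tangent there:
   u gram b (AZ) u^T = 0 for every u in the left kernel of gram b (AX).  As
   M_{1,n} spans C^N and A is invertible, Y |-> u gram b Y u^T vanishes
   identically.  Since n >= k + 3 we may take u with u_b = 0 and u_j <> 0, and
   the configuration moving only vertex j gives u_j^2 = 0. *)

From HB Require Import structures.
From mathcomp Require Import all_boot all_order all_algebra.
From mathcomp Require Import complex reals.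
From mathcomp Require Import ring zify.
Set Implicit Arguments. Unset Strict Implicit. Unset Printing Implicit Defensive.
Import Order.TTheory GRing.Theory Num.Theory.
Local Open Scope ring_scope.

Lemma sym_form_neq0 (F : numDomainType) n (G : 'M[F]_n) :
  G^T = G -> G != 0 -> exists u : 'rV[F]_n, (u *m G *m u^T) 0 0 != 0.
Proof.
move=> Gsym /matrix0Pn[i [j Gij]].
have formE (k l : 'I_n) : (delta_mx 0 k : 'rV_n) *m G *m (delta_mx 0 l : 'rV_n)^T = (G k l)%:M.
  by rewrite [LHS]mx11_scalar -rowE trmx_delta -colE !mxE.
have [Gii|Gii] := eqVneq (G i i) 0; last by exists (delta_mx 0 i); rewrite formE mxE.
have [Gjj|Gjj] := eqVneq (G j j) 0; last by exists (delta_mx 0 j); rewrite formE mxE.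
exists (delta_mx 0 i + delta_mx 0 j).
have Gji : G j i = G i j by rewrite -[in RHS]Gsym mxE.
rewrite linearD /= !(mulmxDl, mulmxDr) !formE !mxE eqxx !mulr1n Gii Gjj Gji add0r addr0.
by rewrite -mulr2n mulrn_eq0 negb_or.
Qed.

Lemma sym_factor (F : numClosedFieldType) n r (G : 'M[F]_n) :
  G^T = G -> (\rank G <= r)%N -> exists M : 'M[F]_(n, r), G = M *m M^T.
Proof.
elim: r G => [|r IH] G Gsym rkG.
  by exists 0; rewrite mul0mx; apply/eqP; rewrite -mxrank_eq0 -leqn0.
have [->|G0] := eqVneq G 0; first by exists 0; rewrite mul0mx.
have [u] := sym_form_neq0 Gsym G0; set c := (_ 0 0) => c0.
set g := u *m G.
pose T : 'M[F]_n := 1%:M - c^-1 *: (u^T *m g).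
have GT : G *m T = G - c^-1 *: (g^T *m g).
  by rewrite mulmxBr mulmx1 -scalemxAr mulmxA /g trmx_mul Gsym.
have gT : g *m T = 0.
  have gu : g *m u^T = c%:M by rewrite [LHS]mx11_scalar.
  by rewrite mulmxBr mulmx1 -scalemxAr mulmxA gu mul_scalar_mx scalerA mulVf // scale1r subrr.
have rkGT : (\rank (G *m T) <= r)%N.
  have g0 : g != 0 by apply: contraNneq c0; rewrite /c -/g => ->; rewrite mul0mx mxE.
  have gGT : (g <= G :&: kermx T)%MS by rewrite sub_capmx submxMl; apply/sub_kermxP.
  rewrite -ltnS; apply: leq_trans rkG; rewrite -(mxrank_mul_ker G T) -addn1 leq_add2l.
  by apply: leq_trans (mxrankS gGT); rewrite lt0n mxrank_eq0.
have GTsym : (G *m T)^T = G *m T by rewrite GT linearB /= linearZ /= trmx_mul trmxK Gsym.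
have [M' GTM'] := IH (G *m T) GTsym rkGT.
exists (row_mx (sqrtC c^-1 *: g^T) M').
rewrite -[r.+1]/(1 + r)%N tr_row_mx mul_row_col -GTM' GT linearZ /= trmxK.
by rewrite -scalemxAr -scalemxAl scalerA -expr2 sqrtCK addrC subrK.
Qed.

Lemma poly_nz_roots_eq0 (F : numDomainType) (p : {poly F}) :
  (forall t, t != 0 -> p.[t] = 0) -> p = 0.
Proof.
move=> p0; apply: (@roots_geq_poly_eq0 _ p (mkseq (fun k => k.+1%:R) (size p))).
- by apply/allP => _ /mapP[k _ ->]; apply/rootP/p0; rewrite pnatr_eq0.
- by apply: mkseq_uniq => k l /eqP; rewrite eqr_nat eqSS => /eqP.
- by rewrite size_mkseq.
Qed.

Lemma left_kernel_coord0 (F : fieldType) n (G : 'M[F]_n) (b : 'I_n) :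
  ((\rank G).+2 <= n)%N ->
  exists (u : 'rV[F]_n) j, [/\ u *m G = 0, u 0 b = 0 & u 0 j != 0].
Proof.
move=> rkG; set K := row_mx G (delta_mx b 0 : 'cV[F]_n).
have rkK : (\rank K < n)%N.
  have -> : K = row_mx G 0 + row_mx 0 (delta_mx b 0) by rewrite add_row_mx addr0 add0r.
  apply: leq_ltn_trans (mxrank_add _ _) _.
  by rewrite rank_row_mx0 rank_row_0mx; have := rank_leq_col (delta_mx b 0 : 'cV[F]_n); lia.
have : kermx K != 0 by rewrite -mxrank_eq0 mxrank_ker; lia.
case/matrix0Pn => i [j kij]; exists (row i (kermx K)), j.
have /eqP := congr1 (row i) (mulmx_ker K).
rewrite row_mul row0 mul_mx_row row_mx_eq0 => /andP[/eqP uG /eqP ub].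
split=> //; last by rewrite mxE.
by move: ub; rewrite -colE => /colP/(_ 0); rewrite !mxE.
Qed.

(* At a point [G] of rank [r] (witnessed by [B G D = 1]), a line [G + t H] of
   matrices of rank [<= r] has its direction [H] in the tangent space
   [{H | u H v = 0 whenever u G = 0 = G v}]. *)
Lemma rank_pencil_tangent (F : numFieldType) n r (G H : 'M[F]_n)
    (B : 'M[F]_(r, n)) (D : 'M[F]_(n, r)) (u : 'rV[F]_n) (v : 'cV[F]_n) :
  B *m G *m D = 1%:M -> u *m G = 0 -> G *m v = 0 ->
  (forall t, t != 0 -> (\rank (G + t *: H)%R <= r)%N) -> u *m H *m v = 0.
Proof.
move=> BGD uG Gv rkGH.
pose N t : 'M[F]_(1 + r) := block_mx (u *m H *m v) (u *m H *m D)
  (t *: (B *m H *m v)) (1%:M + t *: (B *m H *m D)).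
have NE t : col_mx u B *m (G + t *: H) *m row_mx v D = block_mx t%:M 0 0 1%:M *m N t.
  rewrite mul_col_mx mul_col_row mulmx_block !mulmxDr !mulmxDl -!scalemxAr -!scalemxAl.
  by rewrite uG -mulmxA Gv BGD !mul0mx !mulmx0 !mul1mx !add0r !mul_scalar_mx !scaler0 !addr0.
have detN t : t != 0 -> \det (N t) = 0.
  move=> t0; have /eqP : \det (block_mx t%:M 0 0 1%:M *m N t) = 0.
    rewrite -NE; apply/eqP; rewrite -[_ == 0]negbK -unitfE -unitmxE -row_free_unit.
    apply/negP => /eqP full; apply/negP: (rkGH t t0); rewrite -ltnNge -add1n -{1}full.
    apply: leq_trans (mxrankM_maxl _ _) _; exact: mxrankM_maxr.
  by rewrite det_mulmx det_ublock det_scalar det1 expr1 mulr1 mulf_eq0 (negbTE t0) => /eqP.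
(* [\det (N t)] is a polynomial in [t] *)
pose Np : 'M[{poly F}]_(1 + r) := block_mx (map_mx polyC (u *m H *m v))
  (map_mx polyC (u *m H *m D)) ('X *: map_mx polyC (B *m H *m v))
  (1%:M + 'X *: map_mx polyC (B *m H *m D)).
have NpE t : (\det Np).[t] = \det (N t).
  have polyCK m p (M : 'M[F]_(m, p)) : map_mx (horner_eval t) (map_mx polyC M) = M.
    by apply/matrixP => i j; rewrite !mxE horner_evalE hornerC.
  rewrite -horner_evalE -det_map_mx /Np map_block_mx map_mxD map_mx1 !map_mxZ.
  by rewrite !polyCK -[_ 'X]/('X.[t]) hornerX.
have /(congr1 (horner^~ 0)) := poly_nz_roots_eq0 (fun t t0 => etrans (NpE t) (detN t t0)).
rewrite NpE horner0 /N !scale0r addr0 det_ublock det1 mulr1 det_mx11 => uHv.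
by apply/matrixP => i j; rewrite !ord1 uHv mxE.
Qed.

Section EdgeCoordinates.
Variables (F : numFieldType) (n : nat).
Implicit Types (X Y : 'cV[F]_(nedges n)) (i j : 'I_n).

Definition edge_coord X i j : F :=
  \sum_(e | val (enum_val e) \in [:: (i, j); (j, i)]) X e 0.

Lemma edge_coordC X i j : edge_coord X i j = edge_coord X j i.
Proof. by apply: eq_bigl => e; rewrite !inE orbC. Qed.

Lemma edge_coord_diag X i : edge_coord X i i = 0.
Proof.
rewrite /edge_coord big_pred0 // => e; rewrite !inE orbb.
by case: (enum_val e) => -[x y] /= xy; apply/eqP => -[ex ey]; rewrite ex ey ltnn in xy.
Qed.

Lemma edge_coordE X e : edge_coord X (val (enum_val e)).1 (val (enum_val e)).2 = X e 0.
Proof.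
rewrite /edge_coord (big_pred1 e) // => e'.
rewrite /= -(inj_eq enum_val_inj) -(inj_eq val_inj) !inE.
case: (enum_val e') => -[x' y'] /= xy'; case: (enum_val e) => -[x y] /= xy.
case: eqP => //= _; apply/eqP => -[ex ey]; move: xy'; rewrite ex ey.
by rewrite ltnNge ltnW.
Qed.

Lemma edge_coordP t X Y i j :
  edge_coord (t *: X + Y) i j = t * edge_coord X i j + edge_coord Y i j.
Proof. by rewrite /edge_coord mulr_sumr -big_split; apply: eq_bigr => e _; rewrite !mxE. Qed.

(* The Gram matrix of the configuration translated so that vertex [b] is at
   the origin, recovered from the squared distances by polarisation. *)
Definition gram (b : 'I_n) X : 'M[F]_n :=
  \matrix_(i, j) (2^-1 * (edge_coord X b i + edge_coord X b j - edge_coord X i j)).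

Fact gram_is_linear b : linear (gram b).
Proof.
by move=> t X Y; apply/matrixP => i j; rewrite !mxE !edge_coordP; ring.
Qed.

HB.instance Definition _ b := GRing.isLinear.Build F _ _ _ (gram b) (gram_is_linear b).

Lemma gram_sym b X : (gram b X)^T = gram b X.
Proof. by apply/matrixP => i j; rewrite !mxE (edge_coordC X j i) [edge_coord X b j + _]addrC. Qed.

Lemma edge_coord_gram b X i j :
  edge_coord X i j = gram b X i i + gram b X j j - 2 * gram b X i j.
Proof. by rewrite !mxE !edge_coord_diag; field. Qed.

End EdgeCoordinates.

Section Realization.
Variable R : realType.

Lemma edge_coord_mmap d n (p : config R[i] d n) (i j : 'I_n) :
  edge_coord (mmap p) i j = \sum_(k < d) (p i k - p j k) ^+ 2.
Proof.
wlog ij : i j / (i < j)%N.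
  move=> lt; case: (ltngtP i j) => [/lt //|/lt|/val_inj ->].
    by rewrite edge_coordC => ->; apply: eq_bigr => k _; rewrite -sqrrN opprB.
  by rewrite edge_coord_diag big1 // => k _; rewrite subrr expr0n.
pose e := enum_rank (exist (fun x : 'I_n * 'I_n => (x.1 < x.2)%N) (i, j) ij : edge n).
by have := edge_coordE (mmap p) e; rewrite enum_rankK /= => ->; rewrite mxE enum_rankK.
Qed.

Definition diff_mx d n (p : config R[i] d n) (b : 'I_n) : 'M[R[i]]_(n, d) :=
  \matrix_(i, k) (p i k - p b k).

Lemma gram_mmap d n (p : config R[i] d n) b :
  gram b (mmap p) = diff_mx p b *m (diff_mx p b)^T.
Proof.
apply/matrixP => i j; rewrite !mxE !edge_coord_mmap -big_split /= -sumrB mulr_sumr.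
by apply: eq_bigr => k _; rewrite !mxE; field.
Qed.

Lemma Mdn_gram r n (b : 'I_n) (X : 'cV[R[i]]_(nedges n)) :
  Mdn r n X <-> exists M : 'M[R[i]]_(n, r), gram b X = M *m M^T.
Proof.
split=> [[p ->]|[M XM]]; first by exists (diff_mx p b); rewrite gram_mmap.
exists (fun i k => M i k); apply/colP => e.
rewrite -edge_coordE (edge_coord_gram b) XM !mxE /= -big_split /= mulr_sumr -sumrB.
by apply: eq_bigr => k _; rewrite !mxE; ring.
Qed.

Lemma Mdn_rank r n (b : 'I_n) (X : 'cV[R[i]]_(nedges n)) :
  Mdn r n X <-> (\rank (gram b X) <= r)%N.
Proof.
rewrite (Mdn_gram r b); split=> [[M ->]|/(sym_factor (gram_sym b X))[M ->]].
  exact: leq_trans (mxrankM_maxl _ _) (rank_leq_col M).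
by exists M.
Qed.

Lemma Mdn_full r n (Y : 'cV[R[i]]_(nedges n)) : (n <= r)%N -> Mdn r n Y.
Proof.
case: n Y => [|n] Y nr; last exact/(Mdn_rank _ ord0)/(leq_trans (rank_leq_col _) nr).
by exists (fun _ _ => 0); apply/colP => e; case: (enum_val e) => -[[]].
Qed.

Lemma Mdn_add1 k n (X Z : 'cV[R[i]]_(nedges n)) t :
  Mdn k n X -> Mdn 1 n Z -> Mdn k.+1 n (X + t *: Z).
Proof.
case: n X Z => [|n] X Z; first by move=> _ _; apply: Mdn_full.
rewrite !(Mdn_rank _ ord0) linearD linearZ /= => rX rZ.
apply: leq_trans (mxrank_add _ _) _; rewrite -(addn1 k) leq_add //.
exact: leq_trans (mxrank_scale _ _) rZ.
Qed.

Lemma mmap_sum_coords d n (p : config R[i] d n) :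
  mmap p = \sum_(k < d) mmap (fun i (_ : 'I_1) => p i k).
Proof. by apply/colP => e; rewrite summxE !mxE; apply: eq_bigr => k _; rewrite mxE /= big_ord1. Qed.

Lemma additive_eq0_on_Mdn1 n (f : 'cV[R[i]]_(nedges n) -> R[i]) :
  {morph f : X Y / X + Y} -> (forall Z, Mdn 1 n Z -> f Z = 0) -> forall Y, f Y = 0.
Proof.
move=> fD f0 Y; have [p ->] := Mdn_full Y (leqnn n).
have f00 : f 0 = 0 by apply: (addrI (f 0)); rewrite -fD !addr0.
by rewrite mmap_sum_coords (big_morph f fD f00) big1 // => k _; apply: f0; eexists.
Qed.

Lemma Mdn_tangent k n (b : 'I_n) (Y W : 'cV[R[i]]_(nedges n)) (u : 'rV[R[i]]_n) :
  Mdn k.+1 n Y -> (k < \rank (gram b Y))%N -> u *m gram b Y = 0 ->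
  (forall t, Mdn k.+1 n (Y + t *: W)) -> u *m gram b W *m u^T = 0.
Proof.
move=> MY rkY uG MYW; have [P YP] := (Mdn_gram _ b _).1 MY.
have [B BP] : exists B, B *m P = 1%:M.
  apply/row_fullP; rewrite /row_full eqn_leq rank_leq_col.
  by apply: leq_trans rkY _; rewrite YP mxrankM_maxl.
apply: (rank_pencil_tangent (B := B) (D := B^T) _ uG).
- by rewrite YP !mulmxA BP mul1mx -trmx_mul BP trmx1.
- by rewrite -gram_sym -trmx_mul uG trmx0.
by move=> t _; rewrite -linearZ -linearD; apply/(Mdn_rank _ b).
Qed.

Lemma gram_mmap_point n (b j : 'I_n) : j != b ->
  gram b (mmap (fun i (_ : 'I_1) => (i == j)%:R : R[i])) = delta_mx j j.
Proof.
move=> jb; rewrite gram_mmap; apply/matrixP => x y.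
by rewrite !mxE big_ord1 !mxE [b == j]eq_sym (negbTE jb) !subr0 -natrM mulnb.
Qed.

Lemma Mdn_mulmx_pred n k (A : 'M[R[i]]_(nedges n)) :
  (k.+3 <= n)%N -> A \in unitmx -> (forall X, Mdn k.+1 n X -> Mdn k.+1 n (A *m X)) ->
  forall X, Mdn k n X -> Mdn k n (A *m X).
Proof.
move=> kn Aunit AM X MX; pose b : 'I_n := Ordinal (leq_trans (isT : 0 < k.+3)%N kn).
have MAX : Mdn k.+1 n (A *m X) by apply/AM/(Mdn_rank _ b)/leqW/(Mdn_rank _ b).
set G := gram b (A *m X); apply/(Mdn_rank _ b); rewrite leqNgt; apply/negP => rkG.
have [u [j [uG ub uj]]] : exists (u : 'rV[R[i]]_n) j, [/\ u *m G = 0, u 0 b = 0 & u 0 j != 0].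
  by apply: left_kernel_coord0; apply: leq_trans (kn); rewrite !ltnS; apply/(Mdn_rank _ b).
pose phi Y := (u *m gram b Y *m u^T) 0 0.
have phiA Z : Mdn 1 n Z -> phi (A *m Z) = 0.
  move=> MZ; rewrite /phi (Mdn_tangent MAX rkG uG) ?mxE // => t.
  by rewrite scalemxAr -mulmxDr; apply/AM/Mdn_add1.
have phi0 Y : phi Y = 0.
  rewrite -(mulKVmx Aunit Y); apply: (additive_eq0_on_Mdn1 _ phiA) => Y1 Y2.
  by rewrite /phi mulmxDr linearD /= mulmxDr mulmxDl mxE.
have jb : j != b by apply: contra_neq uj => ->.
have := phi0 (mmap (fun i (_ : 'I_1) => (i == j)%:R : R[i])); rewrite /phi gram_mmap_point //.
rewrite -(mul_delta_mx (0 : 'I_1)) mulmxA -colE -mulmxA -rowE mxE big_ord1 !mxE.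
by move/eqP; rewrite mulf_eq0 orbb (negbTE uj).
Qed.

Lemma lin_aut_Mdn_pred n k (A : 'M[R[i]]_(nedges n)) :
  (k.+3 <= n)%N -> lin_aut (Mdn k.+1 n) A -> lin_aut (Mdn k n) A.
Proof.
move=> kn [Aunit [AM Asurj]].
have AiM X : Mdn k.+1 n X -> Mdn k.+1 n (invmx A *m X).
  by case/Asurj => Y MY <-; rewrite mulKmx.
split=> //; split=> [|Y MY]; first exact: Mdn_mulmx_pred.
exists (invmx A *m Y); last by rewrite mulKVmx.
by apply: (Mdn_mulmx_pred kn) MY; rewrite ?unitmx_inv.
Qed.

End Realization.

Theorem lemma3p8 (R : realType) (d n : nat) (hd : (1 <= d)%N) (hn : (d + 2 <= n)%N)
  (A : 'M[R[i]]_(nedges n)) :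
  lin_aut (Mdn d n) A -> lin_aut (Mdn 1 n) A.
Proof.
elim: d hd hn => [//|[//|d] IH] _ hn Ad.
apply: IH => //; first lia.
by apply: lin_aut_Mdn_pred Ad; lia.
Qed.
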